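(* Let $t\geq 2$ be an integer, $m=4t+2$ and $n=2^m+1$, and let $x$ be an odd integer. Then: (1) if $1\leq x\leq 2^{2t+1}-1$, $x$ is a coset leader; (2) if $2^{2t+1}+3\leq x\leq 2^{2t+2}-5$, $x$ is a coset leader; (3) if $2^{2t+2}+5\leq x\leq 2^{2t+2}+2^{2t}-3$, $x$ is a coset leader; (4) if $2^{2t+2}+2^{2t}+3\leq x\leq 2^{2t+2}+2^{2t+1}-3$, $x$ is a coset leader; (5) if $x=2^{2t+1}+1$, or $2^{2t+2}-3\leq x\leq 2^{2t+2}+3$, or $2^{2t+2}+2^{2t}-1\leq x\leq 2^{2t+2}+2^{2t}+1$, or $2^{2t+2}+2^{2t+1}-1\leq x\leq 2^{2t+2}+2^{2t+1}+3$, then $x$ is not a coset leader.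
   Context: For $n=2^m+1$ and an integer $x$, the 2-cyclotomic coset of $x$ modulo $n$ is $C_x=\{x\cdot 2^{j} \bmod n : j\geq 0\}\subseteq\{0,1,\dots,n-1\}$. For $0\leq x\leq n-1$, ''$x$ is a coset leader'' means that $x$ is the smallest element of $C_x$. *)

From mathcomp Require Import all_boot.

Definition cyc_coset (n x : nat) : nat -> Prop :=
  fun y => exists j : nat, y = (x * 2 ^ j) %% n.

Definition coset_leader (n x : nat) : Prop :=
  x < n /\ cyc_coset n x x /\ (forall y, cyc_coset n x y -> x <= y).

From mathcomp Require Import all_boot zify.

(* Since 2^m = -1 (mod n), the coset of x consists of the residues of
   +-x 2^j for j < m, so x is a leader iff each residue of x 2^j (j < m) lies
   in [x, n - x].  For n = 4 H^2 + 1 with H = 2^k (here k = 2t) and odd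
   x <= 6H, this holds automatically unless 2^j is H, 2H or 4H: for smaller j
   no reduction happens, and for larger j the residue is l 2^j - h, where
   x = h 2^(m-j) + l with l odd.  The three remaining residues are computed
   interval by interval. *)

(* Both y and -y have residue at least x modulo n. *)
Definition mid_residue (n x y : nat) : bool := x <= y %% n <= n - x.

Lemma modn_sub_mul a n y : a * n <= y < a.+1 * n -> y %% n = y - a * n.
Proof.
case/andP=> le_any lt_y; rewrite -{1}(subnKC le_any) modnMDl modn_small //; lia.
Qed.

Lemma mid_residue_small n x y : 0 < x <= y -> y + x <= n -> mid_residue n x y.
Proof. by move=> *; rewrite /mid_residue (modn_sub_mul 0); lia. Qed.

Lemma mid_residue_split n x P Q : 0 < Q -> ~~ odd Q -> n = P * Q + 1 -> odd x ->
  x * Q + x <= P * Q -> x <= P -> mid_residue n x (x * P).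
Proof.
move=> Q_gt0 Q_even n_eq x_odd xQ_le x_le.
have x_eq := divn_eq x Q; set h := x %/ Q in x_eq; set l := x %% Q in x_eq.
have l_lt : l < Q by rewrite ltn_pmod.
have l_odd : odd l by move: x_odd; rewrite x_eq oddD oddM (negbTE Q_even) andbF.
have l_gt0 : 0 < l by case: (l) l_odd.
have hx_le : h + x <= P.
  by rewrite -(leq_pmul2l Q_gt0) mulnDr mulnC [Q * P]mulnC; lia.
have lP_le : l * P + P <= P * Q.
  by rewrite -mulSnr mulnC leq_mul2l; lia.
have P_le : P <= l * P by rewrite leq_pmull.
have xP_eq : x * P = h * n + (l * P - h).
  rewrite n_eq mulnDr muln1 {1}x_eq mulnDl -mulnA [Q * P]mulnC; lia.
rewrite /mid_residue xP_eq modnMDl modn_small; lia.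
Qed.

Section FermatModulus.

Variable m : nat.
Local Notation n := (2 ^ m + 1).

Lemma mul_expn_mod r : 0 < r < n -> r * 2 ^ m %% n = n - r.
Proof. by move=> r_range; rewrite (modn_sub_mul r.-1); nia. Qed.

Lemma mul_expnD_mod y j : 0 < y * 2 ^ j %% n ->
  y * 2 ^ (j + m) %% n = n - y * 2 ^ j %% n.
Proof.
by move=> r_gt0; rewrite expnD mulnA -modnMml mul_expn_mod // r_gt0 ltn_pmod // addn1.
Qed.

Lemma mid_residue_of_coset_leader x j : coset_leader n x -> mid_residue n x (x * 2 ^ j).
Proof.
case=> _ [_ x_min]; have le_x k := x_min _ (ex_intro _ k erefl).
have r_lt : x * 2 ^ j %% n < n by rewrite ltn_pmod // addn1.
have [r0|r_gt0] := posnP (x * 2 ^ j %% n).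
  by move: (le_x j); rewrite /mid_residue r0; lia.
by move: (le_x j) (le_x (j + m)); rewrite /mid_residue mul_expnD_mod //; lia.
Qed.

Hypothesis m_gt0 : 0 < m.

Lemma coset_leader_of_mid_residues x : 0 < x < n ->
  (forall j, j < m -> mid_residue n x (x * 2 ^ j)) -> coset_leader n x.
Proof.
move=> x_range mid_lt_m.
have mid j : mid_residue n x (x * 2 ^ j).
  elim/ltn_ind: j => j IH; have [/mid_lt_m //|m_le_j] := ltnP j m.
  have /andP[lo hi] := IH (j - m) ltac:(lia).
  by rewrite /mid_residue -(subnK m_le_j) mul_expnD_mod; lia.
split; first by case/andP: x_range.
split; first by exists 0; rewrite muln1 modn_small //; case/andP: x_range.
by move=> _ [j ->]; case/andP: (mid j).
Qed.

End FermatModulus.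

Definition central_mid_residues (H x : nat) : bool :=
  [&& mid_residue (4 * (H * H) + 1) x (x * H),
      mid_residue (4 * (H * H) + 1) x (x * (2 * H))
    & mid_residue (4 * (H * H) + 1) x (x * (4 * H))].

Section SquareModulus.

Variables k H : nat.
Hypothesis H_eq : H = 2 ^ k.
Hypothesis k_ge4 : 4 <= k.
Local Notation n := (4 * (H * H) + 1).

Lemma expn_modulus : 2 ^ (2 * k + 2) = 4 * (H * H).
Proof. by rewrite addnC expnD mul2n -addnn expnD H_eq. Qed.

Lemma H_ge16 : 16 <= H.
Proof. by rewrite H_eq (_ : 16 = 2 ^ 4) // leq_exp2l. Qed.

Lemma expn_central i : 2 ^ (k + i) = 2 ^ i * H.
Proof. by rewrite expnD mulnC H_eq. Qed.

Lemma mid_residue_outer x j : odd x -> 0 < x <= 6 * H -> j < 2 * k + 2 ->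
  (j < k) || (k + 2 < j) -> mid_residue n x (x * 2 ^ j).
Proof.
move=> x_odd x_range j_lt /orP[j_lt_k | j_gt]; have H_ge := H_ge16.
  have P_le : 2 ^ j * 2 <= H by rewrite H_eq -expnSr leq_exp2l.
  have P_gt0 : 0 < 2 ^ j by rewrite expn_gt0.
  apply: mid_residue_small; nia.
set Q := 2 ^ (2 * k + 2 - j).
have PQ : 2 ^ j * Q = 4 * (H * H) by rewrite -expnD subnKC ?expn_modulus //; lia.
have Q_le : Q * 2 <= H by rewrite H_eq -expnSr leq_exp2l //; lia.
have P_ge : 8 * H <= 2 ^ j by rewrite H_eq (_ : 8 = 2 ^ 3) // -expnD leq_exp2l //; lia.
apply: (mid_residue_split _ _ _ Q) => //.
- by rewrite expn_gt0.
- by rewrite oddX negb_and orbC subn_eq0 -ltnNge j_lt.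
- by rewrite PQ.
- rewrite PQ; nia.
- lia.
Qed.

Lemma central_mid_residues_of_coset_leader x :
  coset_leader n x -> central_mid_residues H x.
Proof.
rewrite -expn_modulus => leader.
have mid i := mid_residue_of_coset_leader _ _ (k + i) leader.
move: (mid 0) (mid 1) (mid 2); rewrite !expn_central expn_modulus mul1n.
by rewrite /central_mid_residues => -> -> ->.
Qed.

Lemma coset_leader_of_central_mid_residues x : odd x -> 0 < x <= 6 * H ->
  central_mid_residues H x -> coset_leader n x.
Proof.
move=> x_odd x_range; have H_ge := H_ge16.
rewrite /central_mid_residues -expn_modulus => /and3P[mid0 mid1 mid2].
apply: coset_leader_of_mid_residues => [| | j j_lt]; [lia | rewrite expn_modulus; nia |].
have [j_lt_k | k_le_j] := ltnP j k.
  by rewrite expn_modulus; apply: mid_residue_outer; rewrite ?j_lt_k.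
have [j_gt | j_le] := ltnP (k + 2) j.
  by rewrite expn_modulus; apply: mid_residue_outer; rewrite ?j_gt ?orbT.
have [i -> i_le] : exists2 i, j = k + i & i <= 2 by exists (j - k); lia.
by case: i i_le => [|[|[]]] // _; rewrite expn_central ?mul1n.
Qed.

End SquareModulus.

Section CentralResidues.

Variable H : nat.
Hypothesis H_large : 16 <= H.
Hypothesis H_even : ~~ odd H.
Local Notation n := (4 * (H * H) + 1).

Lemma odd_neq_mulH x c : odd x -> x != c * H.
Proof. by apply: contraTneq => ->; rewrite oddM (negbTE H_even) andbF. Qed.

Lemma central_mid_residuesE a0 a1 a2 x :
  a0 * n <= x * H < a0.+1 * n ->
  a1 * n <= x * (2 * H) < a1.+1 * n ->
  a2 * n <= x * (4 * H) < a2.+1 * n ->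
  central_mid_residues H x =
    [&& x <= x * H - a0 * n <= n - x,
        x <= x * (2 * H) - a1 * n <= n - x
      & x <= x * (4 * H) - a2 * n <= n - x].
Proof.
move=> r0 r1 r2; rewrite /central_mid_residues /mid_residue.
by rewrite (modn_sub_mul _ _ _ r0) (modn_sub_mul _ _ _ r1) (modn_sub_mul _ _ _ r2).
Qed.

Lemma central_mid_residues_lt2H x : odd x -> 0 < x < 2 * H -> central_mid_residues H x.
Proof.
move=> /(odd_neq_mulH _ 1); rewrite mul1n => x_neqH x_range.
have [x_lt | x_gt] := ltnP x H.
  by rewrite (central_mid_residuesE 0 0 0); nia.
by rewrite (central_mid_residuesE 0 0 1); nia.
Qed.

Lemma central_mid_residues_2H_4H x : odd x -> 2 * H + 3 <= x <= 4 * H - 5 ->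
  central_mid_residues H x.
Proof.
move=> /(odd_neq_mulH _ 3) x_neq3H x_range.
have [x_lt | x_gt] := ltnP x (3 * H).
  by rewrite (central_mid_residuesE 0 1 2); nia.
by rewrite (central_mid_residuesE 0 1 3); nia.
Qed.

Lemma central_mid_residues_4H_5H x : 4 * H + 5 <= x <= 5 * H - 3 ->
  central_mid_residues H x.
Proof. by move=> x_range; rewrite (central_mid_residuesE 1 2 4); nia. Qed.

Lemma central_mid_residues_5H_6H x : 5 * H + 3 <= x <= 6 * H - 3 ->
  central_mid_residues H x.
Proof. by move=> x_range; rewrite (central_mid_residuesE 1 2 5); nia. Qed.

Lemma not_central_mid_residues x : odd x ->
  x = 2 * H + 1 \/ 4 * H - 3 <= x <= 4 * H + 3 \/ 5 * H - 1 <= x <= 5 * H + 1 \/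
    6 * H - 1 <= x <= 6 * H + 3 ->
  ~~ central_mid_residues H x.
Proof.
move=> x_odd x_range; have := odd_double_half x; rewrite x_odd => x_eq.
have H_eq := even_halfK H_even.
have : x = 2 * H + 1 \/ x = 4 * H - 3 \/ x = 4 * H - 1 \/ x = 4 * H + 1 \/ x = 4 * H + 3 \/
       x = 5 * H - 1 \/ x = 5 * H + 1 \/ x = 6 * H - 1 \/ x = 6 * H + 1 \/ x = 6 * H + 3.
  by case: x_range; lia.
case=> [|[|[|[|[|[|[|[|[|]]]]]]]]] ->.
- by rewrite (central_mid_residuesE 0 1 2); nia.
- by rewrite (central_mid_residuesE 0 1 3); nia.
- by rewrite (central_mid_residuesE 0 1 3); nia.
- by rewrite (central_mid_residuesE 1 2 4); nia.
- by rewrite (central_mid_residuesE 1 2 4); nia.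
- by rewrite (central_mid_residuesE 1 2 4); nia.
- by rewrite (central_mid_residuesE 1 2 5); nia.
- by rewrite (central_mid_residuesE 1 2 5); nia.
- by rewrite (central_mid_residuesE 1 3 6); nia.
- by rewrite (central_mid_residuesE 1 3 6); nia.
Qed.

End CentralResidues.

Theorem theorem4p1 (t : nat) (ht : 2 <= t) :
  let m := 4 * t + 2 in
  let n := 2 ^ m + 1 in
  forall x : nat, odd x ->
  [/\ (1 <= x <= 2 ^ (2 * t + 1) - 1 -> coset_leader n x),
      (2 ^ (2 * t + 1) + 3 <= x <= 2 ^ (2 * t + 2) - 5 -> coset_leader n x),
      (2 ^ (2 * t + 2) + 5 <= x <= 2 ^ (2 * t + 2) + 2 ^ (2 * t) - 3 ->
         coset_leader n x),
      (2 ^ (2 * t + 2) + 2 ^ (2 * t) + 3 <= x <= 2 ^ (2 * t + 2) + 2 ^ (2 * t + 1) - 3 ->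
         coset_leader n x)
    & ((x = 2 ^ (2 * t + 1) + 1) \/
       (2 ^ (2 * t + 2) - 3 <= x <= 2 ^ (2 * t + 2) + 3) \/
       (2 ^ (2 * t + 2) + 2 ^ (2 * t) - 1 <= x <= 2 ^ (2 * t + 2) + 2 ^ (2 * t) + 1) \/
       (2 ^ (2 * t + 2) + 2 ^ (2 * t + 1) - 1 <= x <= 2 ^ (2 * t + 2) + 2 ^ (2 * t + 1) + 3) ->
       ~ coset_leader n x)].
Proof.
move=> m n x x_odd; set H := 2 ^ (2 * t).
have k_ge4 : 4 <= 2 * t by lia.
have H_large : 16 <= H := H_ge16 (2 * t) H erefl k_ge4.
have H_even : ~~ odd H by rewrite oddX negb_or; lia.
have -> : n = 4 * (H * H) + 1 by rewrite /n /m -(expn_modulus (2 * t) H erefl) mulnA.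
rewrite -/H !(expn_central (2 * t) H erefl) expn1 (_ : 2 ^ 2 = 4) //.
have leader := coset_leader_of_central_mid_residues (2 * t) H erefl k_ge4 x x_odd.
split=> x_range.
- by apply: leader; [lia | apply: central_mid_residues_lt2H; lia].
- by apply: leader; [lia | apply: central_mid_residues_2H_4H; lia].
- by apply: leader; [lia | apply: central_mid_residues_4H_5H; lia].
- by apply: leader; [lia | apply: central_mid_residues_5H_6H; lia].
move/(central_mid_residues_of_coset_leader (2 * t) H erefl).
by apply/negP/not_central_mid_residues => //; lia.
Qed.
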